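(* Let $\boldsymbol{f}$ be a clean map on an $\boldsymbol{\mathcal{L}}_\Lambda$ modal space $\boldsymbol{X}$. Then $\boldsymbol{f}$ is continuous with respect to the Stone topology on $\boldsymbol{X}$.
   Context: Given a countable set $\Phi$ of atoms and a finite set $I$ of agents, $\mathcal{L}$ is the modal language $\varphi::=\top\mid p\mid\neg\varphi\mid\varphi\wedge\varphi\mid\square_i\varphi$. A logic $\Lambda$ is a normal modal logic over $\mathcal{L}$ extending $K$; $\boldsymbol{\varphi}$ is the class of formulas $\Lambda$-equivalent to $\varphi$, $\boldsymbol{\mathcal{L}}_\Lambda$ the set of such classes. Kripke models $M=(\llbracket M\rrbracket,R,\llbracket\cdot\rrbracket)$ have countable nonempty state sets, relations $R_i$ and a valuation; pointed models $Ms$ are evaluated with standard semantics. For a set $X$ of pointed Kripke models, the $\boldsymbol{\mathcal{L}}_\Lambda$ modal space is $\boldsymbol{X}=\{\boldsymbol{x}:x\in X\}$, $\boldsymbol{x}=\{y\in X:y\vDash\varphi\text{ iff }x\vDash\varphi\text{ for all }\varphi\}$. The Stone topology on $\boldsymbol{X}$ has basis $U_{\boldsymbol{\varphi}}=\{\boldsymbol{x}:x\vDash\varphi\}$, $\varphi\in\mathcal{L}$. A multi-pointed action model is $\Sigma\Gamma=(\llbracket\Sigma\rrbracket,\mathsf{R},pre,post,\Gamma)$: countable nonempty set of actions, relations $\mathsf{R}_i$ on it, $pre:\llbracket\Sigma\rrbracket\to\mathcal{L}$, $post:\llbracket\Sigma\rrbracket\to\mathcal{L}$ with each $post(\sigma)$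 either $\top$ or a conjunction of literals over $\Phi$, and $\emptyset\ne\Gamma\subseteq\llbracket\Sigma\rrbracket$. It is precondition finite if $\{\boldsymbol{pre(\sigma)}\}$ is finite; exhaustive over $X$ if each $x\in X$ satisfies $pre(\sigma)$ for some $\sigma\in\Gamma$; deterministic over $X$ if no $x\in X$ satisfies $pre(\sigma)\wedge pre(\sigma')$ for distinct $\sigma,\sigma'\in\Gamma$. The product update $Ms\otimes\Sigma\Gamma$ has states $\{(s,\sigma):Ms\vDash pre(\sigma)\}$, relations $(s,\sigma)R'_i(t,\tau)$ iff $sR_it$ and $\sigma\mathsf{R}_i\tau$, valuation $\llbracket p\rrbracket'=\{(s,\sigma):s\in\llbracket p\rrbracket,post(\sigma)\nvDash\neg p\}\cup\{(s,\sigma):post(\sigma)\vDash p\}$, and designated state $(s,\sigma)$ with $\sigma\in\Gamma$ the unique action with $Ms\vDash pre(\sigma)$. $\Sigma\Gamma$ is closing over $X$ if $x\otimes\Sigma\Gamma\in X$ for all $x\in X$. A map $\boldsymbol{f}:\boldsymbol{X}\to\boldsymbol{X}$ is clean if there is a precondition finite $\Sigma\Gamma$, closing, deterministic and exhaustive over $X$, with $\boldsymbol{f}(\boldsymbol{x})=\boldsymbol{y}$ iff $x\otimes\Sigma\Gamma\in\boldsymbol{y}$. *)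

From Stdlib Require Import List Arith Cantor ProofIrrelevance.


Definition countable (T : Type) : Prop :=
  exists f : T -> nat, forall a b, f a = f b -> a = b.

Definition finite_type (T : Type) : Prop := exists l : list T, forall a, In a l.

Section Lang.
Context {Atom Ag : Type}.

Inductive form : Type :=
| Top : form
| Var : Atom -> form
| Neg : form -> form
| And : form -> form -> form
| Box : Ag -> form -> form.

Definition Imp (p q : form) : form := Neg (And p (Neg q)).
Definition Iff (p q : form) : form := And (Imp p q) (Imp q p).

(* propositional evaluation: atoms and boxed formulas are treated as
   propositional letters, valued by g *)
Fixpoint peval (g : form -> Prop) (p : form) : Prop :=
  match p with
  | Top => True
  | Var a => g (Var a)
  | Neg q => ~ peval g q
  | And q r => peval g q /\ peval g r
  | Box i q => g (Box i q)
  end.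

Definition tautology (p : form) : Prop := forall g, peval g p.

Definition pentails (p q : form) : Prop := forall g, peval g p -> peval g q.

Fixpoint subst (s : Atom -> form) (p : form) : form :=
  match p with
  | Top => Top
  | Var a => s a
  | Neg q => Neg (subst s q)
  | And q r => And (subst s q) (subst s r)
  | Box i q => Box i (subst s q)
  end.

Record normal_logic (L : form -> Prop) : Prop := {
  nl_taut : forall p, tautology p -> L p;
  nl_K : forall i p q, L (Imp (Box i (Imp p q)) (Imp (Box i p) (Box i q)));
  nl_MP : forall p q, L p -> L (Imp p q) -> L q;
  nl_nec : forall i p, L p -> L (Box i p);
  nl_subst : forall s p, L p -> L (subst s p)
}.

Definition lequiv (L : form -> Prop) (p q : form) : Prop := L (Iff p q).

Record kmodel : Type := {
  st : Type;
  st_count : countable st;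
  st_inh : inhabited st;
  rel : Ag -> st -> st -> Prop;
  val : Atom -> st -> Prop
}.

Record pmodel : Type := { pm : kmodel; pt : st pm }.

Fixpoint sat (M : kmodel) (s : st M) (p : form) : Prop :=
  match p with
  | Top => True
  | Var a => val M a s
  | Neg q => ~ sat M s q
  | And q r => sat M s q /\ sat M s r
  | Box i q => forall t, rel M i s t -> sat M t q
  end.

Definition psat (x : pmodel) (p : form) : Prop := sat (pm x) (pt x) p.

Inductive literal : form -> Prop :=
| lit_pos : forall a, literal (Var a)
| lit_neg : forall a, literal (Neg (Var a)).

Inductive lit_conj : form -> Prop :=
| lc_lit : forall p, literal p -> lit_conj p
| lc_and : forall p q, lit_conj p -> lit_conj q -> lit_conj (And p q).

Record amodel : Type := {
  act : Type;
  act_count : countable act;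
  act_inh : inhabited act;
  arel : Ag -> act -> act -> Prop;
  pre : act -> form;
  post : act -> form;
  post_ok : forall a, post a = Top \/ lit_conj (post a);
  des : act -> Prop;
  des_ne : exists a, des a
}.

Lemma countable_upd (M : kmodel) (S : amodel) :
  countable {p : st M * act S | sat M (fst p) (pre S (snd p))}.
Proof.
  destruct (st_count M) as [f Hf]; destruct (act_count S) as [g Hg].
  exists (fun p => to_nat (f (fst (proj1_sig p)), g (snd (proj1_sig p)))).
  intros [[a1 b1] h1] [[a2 b2] h2] E.
  apply (f_equal of_nat) in E; rewrite !cancel_of_to in E.
  injection E as E1 E2; apply Hf in E1; apply Hg in E2; subst.
  f_equal; apply proof_irrelevance.
Qed.

Lemma inhabited_upd (M : kmodel) (S : amodel) (s : st M) (a : act S) :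
  sat M s (pre S a) ->
  inhabited {p : st M * act S | sat M (fst p) (pre S (snd p))}.
Proof. intro h; constructor; exists (s, a); exact h. Qed.

Definition upd_model (M : kmodel) (S : amodel) (s0 : st M) (a0 : act S)
  (h0 : sat M s0 (pre S a0)) : kmodel :=
  {| st := {p : st M * act S | sat M (fst p) (pre S (snd p))};
     st_count := countable_upd M S;
     st_inh := inhabited_upd M S s0 a0 h0;
     rel := fun i u v => rel M i (fst (proj1_sig u)) (fst (proj1_sig v)) /\
                         arel S i (snd (proj1_sig u)) (snd (proj1_sig v));
     val := fun p u =>
       (val M p (fst (proj1_sig u)) /\
        ~ pentails (post S (snd (proj1_sig u))) (Neg (Var p))) \/
       pentails (post S (snd (proj1_sig u))) (Var p) |}.

Definition upd_pointed (M : kmodel) (S : amodel) (s0 : st M) (a0 : act S)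
  (h0 : sat M s0 (pre S a0)) : pmodel :=
  {| pm := upd_model M S s0 a0 h0;
     pt := exist _ (s0, a0) h0 |}.

(* "x (x) Sigma Gamma \in P" : the designated state is (s, a) with a in Gamma
   and x |= pre(a) (unique when the action model is deterministic over X) *)
Definition upd_in (x : pmodel) (S : amodel) (P : pmodel -> Prop) : Prop :=
  exists a (ha : des S a) (h : psat x (pre S a)), P (upd_pointed (pm x) S (pt x) a h).

Definition precondition_finite (L : form -> Prop) (S : amodel) : Prop :=
  exists l : list form, forall a, exists q, In q l /\ lequiv L (pre S a) q.

Definition exhaustive (X : pmodel -> Prop) (S : amodel) : Prop :=
  forall x, X x -> exists a, des S a /\ psat x (pre S a).

Definition deterministic (X : pmodel -> Prop) (S : amodel) : Prop :=
  forall x, X x -> forall a b, des S a -> des S b -> a <> b ->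
    ~ (psat x (pre S a) /\ psat x (pre S b)).

Definition closing (X : pmodel -> Prop) (S : amodel) : Prop :=
  forall x, X x -> upd_in x S X.

Definition mclass (X : pmodel -> Prop) (x : pmodel) : pmodel -> Prop :=
  fun y => X y /\ (forall p, psat y p <-> psat x p).

Definition mspace (X : pmodel -> Prop) : Type :=
  {C : pmodel -> Prop | exists x, X x /\ C = mclass X x}.

Definition mpoint (X : pmodel -> Prop) (x : pmodel) (hx : X x) : mspace X :=
  exist _ (mclass X x) (ex_intro _ x (conj hx eq_refl)).

Definition basic_open (X : pmodel -> Prop) (p : form) : mspace X -> Prop :=
  fun c => exists x, X x /\ proj1_sig c = mclass X x /\ psat x p.

Definition stone_open (X : pmodel -> Prop) (O : mspace X -> Prop) : Prop :=
  forall c, O c -> exists p, basic_open X p c /\ (forall d, basic_open X p d -> O d).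

Definition stone_continuous (X : pmodel -> Prop) (f : mspace X -> mspace X) : Prop :=
  forall O, stone_open X O -> stone_open X (fun c => O (f c)).

Definition clean (L : form -> Prop) (X : pmodel -> Prop) (f : mspace X -> mspace X) : Prop :=
  exists S : amodel,
    precondition_finite L S /\ closing X S /\ deterministic X S /\ exhaustive X S /\
    (forall x (hx : X x) (d : mspace X), f (mpoint X x hx) = d <-> upd_in x S (proj1_sig d)).

End Lang.

(** Fix a basic open set [U_phi] containing [f x], and let [n] be the modal
    depth of [phi].  Only finitely many formulas matter: the atoms of [phi]
    and representatives of the finitely many preconditions.  Over such a
    finite base there are finitely many characteristic formulas of depth [n],
    and two states satisfying the same one are [n]-bisimilar.  If [y]
    satisfies the characteristic formula [chi] of [x], the same action fires
    at [x] and [y] (determinism), the two product updates are again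
    [n]-bisimilar on the atoms of [phi], hence [f y] lies in [U_phi].  So
    [U_chi] is a basic neighbourhood of [x] mapped into [U_phi]. *)

From Stdlib Require Import List Lia Classical ProofIrrelevance.
Import ListNotations.

Fixpoint sublists {T : Type} (l : list T) : list (list T) :=
  match l with
  | [] => [[]]
  | x :: l => sublists l ++ map (cons x) (sublists l)
  end.

Lemma sublists_incl {T : Type} (l S : list T) : In S (sublists l) -> incl S l.
Proof.
  revert S; induction l as [|y l IH]; simpl; intros S HS x Hx.
  - destruct HS as [<-|[]]; destruct Hx.
  - apply in_app_or in HS as [HS|HS].
    + right; exact (IH S HS x Hx).
    + apply in_map_iff in HS as [S' [<- HS']].
      destruct Hx as [<-|Hx]; [left; reflexivity | right; exact (IH S' HS' x Hx)].
Qed.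

Lemma sublists_select {T : Type} (P : T -> Prop) (l : list T) :
  exists S, In S (sublists l) /\ forall x, In x S <-> In x l /\ P x.
Proof.
  induction l as [|y l [S [HS ES]]]; simpl.
  - exists []; simpl; tauto.
  - destruct (classic (P y)) as [Py|Py].
    + exists (y :: S); split.
      * apply in_or_app; right; apply in_map; exact HS.
      * intro x; simpl; rewrite ES; split; [intros [<-|]|intros [[<-|]]]; tauto.
    + exists S; split.
      * apply in_or_app; left; exact HS.
      * intro x; rewrite ES; split; [|intros [[<-|]]]; tauto.
Qed.

Section Bisimulation.
Context {Atom Ag : Type}.
Local Notation form := (@form Atom Ag).
Local Notation kmodel := (@kmodel Atom Ag).

Fixpoint depth (p : form) : nat :=
  match p with
  | Top | Var _ => 0
  | Neg q => depth q
  | And q r => Nat.max (depth q) (depth r)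
  | Box _ q => S (depth q)
  end.

Fixpoint atoms (p : form) : list Atom :=
  match p with
  | Top => []
  | Var a => [a]
  | Neg q | Box _ q => atoms q
  | And q r => atoms q ++ atoms r
  end.

Definition agree (B : list form) (M M' : kmodel) (s : st M) (s' : st M') : Prop :=
  forall q, In q B -> (sat M s q <-> sat M' s' q).

(* [n]-bisimilarity relative to a base [B] of formulas, which play the role of atoms. *)
Fixpoint nbisim (B : list form) (n : nat) (M M' : kmodel) (s : st M) (s' : st M') : Prop :=
  agree B M M' s s' /\
  match n with
  | 0 => True
  | S k => forall i,
      (forall t, rel M i s t -> exists t', rel M' i s' t' /\ nbisim B k M M' t t') /\
      (forall t', rel M' i s' t' -> exists t, rel M i s t /\ nbisim B k M M' t t')
  end.

Lemma nbisim_agree (B : list form) n (M M' : kmodel) s s' :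
  nbisim B n M M' s s' -> agree B M M' s s'.
Proof. destruct n; apply proj1. Qed.

Lemma nbisim_sat (B : list form) (M M' : kmodel) (phi : form) :
  (forall a, In a (atoms phi) -> In (Var a) B) ->
  forall n s s', depth phi <= n -> nbisim B n M M' s s' ->
  (sat M s phi <-> sat M' s' phi).
Proof.
  induction phi as [|a|q IH|q IHq r IHr|i q IH]; simpl; intros hat n s s' hd E.
  - tauto.
  - apply (nbisim_agree _ _ _ _ _ _ E (Var a)), hat; left; reflexivity.
  - rewrite (IH hat n s s' hd E); tauto.
  - rewrite (IHq (fun a h => hat a (in_or_app _ _ _ (or_introl h))) n s s') by (lia || exact E).
    rewrite (IHr (fun a h => hat a (in_or_app _ _ _ (or_intror h))) n s s') by (lia || exact E).
    tauto.
  - destruct n as [|k]; [lia|].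
    destruct (proj2 E i) as [zig zag]; split.
    + intros H t' R'.
      destruct (zag t' R') as [t [R Et]].
      exact (proj1 (IH hat k t t' ltac:(lia) Et) (H t R)).
    + intros H t R.
      destruct (zig t R) as [t' [R' Et]].
      exact (proj2 (IH hat k t t' ltac:(lia) Et) (H t' R')).
Qed.

Fixpoint conjl (l : list form) : form :=
  match l with
  | [] => Top
  | p :: l => And p (conjl l)
  end.

Definition disjl (l : list form) : form := Neg (conjl (map Neg l)).

Definition Dia (i : Ag) (p : form) : form := Neg (Box i (Neg p)).

(* Moss' cover modality. *)
Definition nabla (i : Ag) (S : list form) : form :=
  And (conjl (map (Dia i) S)) (Box i (disjl S)).

Lemma sat_conjl (M : kmodel) s (l : list form) :
  sat M s (conjl l) <-> forall p, In p l -> sat M s p.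
Proof.
  induction l as [|p l IH]; simpl.
  - split; [intros _ q []|tauto].
  - rewrite IH; split; [intros [Hp Hl] q [<-|Hq]; auto | intro H; split; auto].
Qed.

Lemma sat_disjl (M : kmodel) s (l : list form) :
  sat M s (disjl l) <-> exists p, In p l /\ sat M s p.
Proof.
  unfold disjl; simpl; rewrite sat_conjl; split.
  - intro H; apply NNPP; intro Hn; apply H; intros q Hq.
    apply in_map_iff in Hq as [p [<- Hp]]; simpl; eauto.
  - intros [p [Hp Sp]] H; exact (H (Neg p) (in_map _ _ _ Hp) Sp).
Qed.

Lemma sat_Dia (M : kmodel) s i (p : form) :
  sat M s (Dia i p) <-> exists t, rel M i s t /\ sat M t p.
Proof.
  simpl; split.
  - intro H; apply NNPP; intro Hn; apply H; intros t R St; eauto.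
  - intros [t [R St]] H; exact (H t R St).
Qed.

Lemma sat_nabla (M : kmodel) s i (S : list form) :
  sat M s (nabla i S) <->
  (forall p, In p S -> exists t, rel M i s t /\ sat M t p) /\
  (forall t, rel M i s t -> exists p, In p S /\ sat M t p).
Proof.
  unfold nabla; simpl; rewrite sat_conjl.
  split; intros [Hdia Hbox]; split.
  - intros p Hp; apply sat_Dia, Hdia, in_map, Hp.
  - intros t R; apply sat_disjl, Hbox, R.
  - intros q Hq; apply in_map_iff in Hq as [p [<- Hp]]; apply sat_Dia, Hdia, Hp.
  - intros t R; apply sat_disjl, Hbox, R.
Qed.

Lemma nabla_zig (M M' : kmodel) s s' i (S : list form) t :
  sat M s (nabla i S) -> sat M' s' (nabla i S) -> rel M i s t ->
  exists p t', In p S /\ rel M' i s' t' /\ sat M t p /\ sat M' t' p.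
Proof.
  rewrite !sat_nabla; intros [_ Hbox] [Hdia' _] R.
  destruct (Hbox t R) as [p [Hp Sp]].
  destruct (Hdia' p Hp) as [t' [R' Sp']].
  exists p, t'; auto.
Qed.

Fixpoint conj_choices (ls : list (list form)) : list form :=
  match ls with
  | [] => [Top]
  | l :: ls => flat_map (fun c => map (And c) (conj_choices ls)) l
  end.

Lemma conj_choices_cover (M : kmodel) s (ls : list (list form)) :
  (forall l, In l ls -> exists c, In c l /\ sat M s c) ->
  exists c, In c (conj_choices ls) /\ sat M s c.
Proof.
  induction ls as [|l ls IH]; simpl; intro Hcov.
  - exists Top; simpl; tauto.
  - destruct (Hcov l (or_introl eq_refl)) as [c [Hc Sc]].
    destruct IH as [d [Hd Sd]]; [intros l' Hl'; apply Hcov; right; exact Hl'|].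
    exists (And c d); split.
    + apply in_flat_map; exists c; split; [exact Hc | apply in_map, Hd].
    + simpl; tauto.
Qed.

Lemma conj_choices_common (M M' : kmodel) s s' (ls : list (list form)) c :
  In c (conj_choices ls) -> sat M s c -> sat M' s' c ->
  forall l, In l ls -> exists d, In d l /\ sat M s d /\ sat M' s' d.
Proof.
  revert c; induction ls as [|l0 ls IH]; simpl; intros c Hc Sc Sc' l Hl; [destruct Hl|].
  apply in_flat_map in Hc as [d [Hd Hc]].
  apply in_map_iff in Hc as [e [<- He]].
  destruct Sc as [Sd Se], Sc' as [Sd' Se'].
  destruct Hl as [<-|Hl]; [exists d; auto | exact (IH e He Se Se' l Hl)].
Qed.

Fixpoint chars (B : list form) (ags : list Ag) (n : nat) : list form :=
  conj_choices (map (fun b => [b; Neg b]) B ++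
    match n with
    | 0 => []
    | S k => map (fun i => map (nabla i) (sublists (chars B ags k))) ags
    end).

Lemma chars_cover (B : list form) (ags : list Ag) n (M : kmodel) s :
  exists c, In c (chars B ags n) /\ sat M s c.
Proof.
  assert (Hlits : forall s l, In l (map (fun b => [b; Neg b]) B) ->
                  exists c, In c l /\ sat M s c).
  { intros t l Hl; apply in_map_iff in Hl as [b [<- _]].
    destruct (classic (sat M t b)); [exists b | exists (Neg b)]; simpl; tauto. }
  revert s; induction n as [|k IH]; intro s; apply conj_choices_cover;
    intros l Hl; apply in_app_or in Hl as [Hl|Hl];
    [exact (Hlits s l Hl) | destruct Hl | exact (Hlits s l Hl) |].
  apply in_map_iff in Hl as [i [<- _]].
  destruct (sublists_select (fun p => exists t, rel M i s t /\ sat M t p) (chars B ags k))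
    as [S [HS ES]].
  exists (nabla i S); split; [apply in_map, HS|].
  apply sat_nabla; split.
  - intros p Hp; apply ES, Hp.
  - intros t R; destruct (IH t) as [p [Hp Sp]].
    exists p; split; [apply ES; eauto | exact Sp].
Qed.

Lemma chars_agree (B : list form) (ags : list Ag) n (M M' : kmodel) s s' c :
  In c (chars B ags n) -> sat M s c -> sat M' s' c -> agree B M M' s s'.
Proof.
  intros Hc Sc Sc' q Hq.
  assert (Hls : exists ls, chars B ags n = conj_choices (map (fun b => [b; Neg b]) B ++ ls))
    by (destruct n; eexists; reflexivity).
  destruct Hls as [ls Els]; rewrite Els in Hc.
  destruct (conj_choices_common M M' s s' _ c Hc Sc Sc' [q; Neg q]) as [d [Hd [Sd Sd']]].
  - apply in_or_app; left; apply in_map_iff; eauto.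
  - destruct Hd as [<-|[<-|[]]]; simpl in *; tauto.
Qed.

Lemma chars_nbisim (B : list form) (ags : list Ag) (hags : forall i, In i ags) n
  (M M' : kmodel) s s' c :
  In c (chars B ags n) -> sat M s c -> sat M' s' c -> nbisim B n M M' s s'.
Proof.
  revert c s s'; induction n as [|k IH]; intros c s s' Hc Sc Sc';
    (split; [exact (chars_agree B ags _ M M' s s' c Hc Sc Sc') |]); [exact I|].
  intro i.
  destruct (conj_choices_common M M' s s' _ c Hc Sc Sc'
              (map (nabla i) (sublists (chars B ags k)))) as [d [Hd [Sd Sd']]].
  { apply in_or_app; right; apply in_map_iff; eauto. }
  apply in_map_iff in Hd as [S [<- HS]].
  split.
  - intros t R.
    destruct (nabla_zig M M' s s' i S t Sd Sd' R) as [p [t' [Hp [R' [Sp Sp']]]]].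
    exists t'; split; [exact R' | exact (IH p t t' (sublists_incl _ _ HS p Hp) Sp Sp')].
  - intros t' R'.
    destruct (nabla_zig M' M s' s i S t' Sd' Sd R') as [p [t [Hp [R [Sp' Sp]]]]].
    exists t; split; [exact R | exact (IH p t t' (sublists_incl _ _ HS p Hp) Sp Sp')].
Qed.

End Bisimulation.

Section ProductUpdate.
Context {Atom Ag : Type}.
Local Notation form := (@form Atom Ag).
Local Notation kmodel := (@kmodel Atom Ag).
Local Notation amodel := (@amodel Atom Ag).

Variable L : form -> Prop.

Definition models_logic (M : kmodel) (s : st M) : Prop := forall p, L p -> sat M s p.

Lemma models_logic_rel (hL : normal_logic L) (M : kmodel) s i t :
  models_logic M s -> rel M i s t -> models_logic M t.
Proof. intros Hs R p Hp; exact (Hs _ (nl_nec _ hL i p Hp) t R). Qed.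

Lemma lequiv_sat (M : kmodel) s (p q : form) :
  models_logic M s -> lequiv L p q -> (sat M s p <-> sat M s q).
Proof.
  intros Hs Hpq; apply Hs in Hpq; simpl in Hpq; destruct Hpq as [Hpq Hqp].
  split; intro H; apply NNPP; intro Hn; [apply Hpq | apply Hqp]; tauto.
Qed.

Definition pre_reps (S : amodel) (B : list form) : Prop :=
  forall a, exists q, In q B /\ lequiv L (pre S a) q.

Lemma pre_transfer (S : amodel) B (hB : pre_reps S B) (M M' : kmodel) t t' a :
  models_logic M t -> models_logic M' t' -> agree B M M' t t' ->
  sat M t (pre S a) -> sat M' t' (pre S a).
Proof.
  intros Ht Ht' E H.
  destruct (hB a) as [q [Hq Eq]].
  apply (lequiv_sat M' t' _ _ Ht' Eq), (E q Hq), (lequiv_sat M t _ _ Ht Eq), H.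
Qed.

Lemma upd_agree (S : amodel) B (A : list Atom) (hA : incl (map Var A) B)
  (M M' : kmodel) s0 a0 h0 s0' a0' h0' s s' a (hs : sat M s (pre S a))
  (hs' : sat M' s' (pre S a)) :
  agree B M M' s s' ->
  agree (map Var A) (upd_model M S s0 a0 h0) (upd_model M' S s0' a0' h0')
    (exist _ (s, a) hs : st (upd_model M S s0 a0 h0))
    (exist _ (s', a) hs' : st (upd_model M' S s0' a0' h0')).
Proof.
  intros E q Hq; pose proof (E q (hA q Hq)) as Eq.
  apply in_map_iff in Hq as [p [<- _]]; simpl in *; tauto.
Qed.

Lemma upd_nbisim (hL : normal_logic L) (S : amodel) B (hB : pre_reps S B)
  (A : list Atom) (hA : incl (map Var A) B)
  (M M' : kmodel) s0 a0 h0 s0' a0' h0' n :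
  forall s s' a (hs : sat M s (pre S a)) (hs' : sat M' s' (pre S a)),
  models_logic M s -> models_logic M' s' -> nbisim B n M M' s s' ->
  nbisim (map Var A) n (upd_model M S s0 a0 h0) (upd_model M' S s0' a0' h0')
    (exist _ (s, a) hs : st (upd_model M S s0 a0 h0))
    (exist _ (s', a) hs' : st (upd_model M' S s0' a0' h0')).
Proof.
  induction n as [|k IH]; intros s s' a hs hs' Hs Hs' [E0 E];
    (split; [exact (upd_agree S B A hA M M' s0 a0 h0 s0' a0' h0' s s' a hs hs' E0) |]);
    [exact I|].
  intro i; destruct (E i) as [zig zag]; split.
  - intros [[t c] ht] [R Rc]; simpl in *.
    destruct (zig t R) as [t' [R' Et]].
    pose proof (models_logic_rel hL M s i t Hs R) as Ht.
    pose proof (models_logic_rel hL M' s' i t' Hs' R') as Ht'.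
    pose proof (pre_transfer S B hB M M' t t' c Ht Ht' (nbisim_agree _ _ _ _ _ _ Et) ht) as ht'.
    exists (exist _ (t', c) ht'); split; [split; assumption|].
    exact (IH t t' c ht ht' Ht Ht' Et).
  - intros [[t' c] ht'] [R' Rc]; simpl in *.
    destruct (zag t' R') as [t [R Et]].
    pose proof (models_logic_rel hL M s i t Hs R) as Ht.
    pose proof (models_logic_rel hL M' s' i t' Hs' R') as Ht'.
    pose proof (pre_transfer S B hB M' M t' t c Ht' Ht
                  (fun q Hq => iff_sym (nbisim_agree _ _ _ _ _ _ Et q Hq)) ht') as ht.
    exists (exist _ (t, c) ht); split; [split; assumption|].
    exact (IH t t' c ht ht' Ht Ht' Et).
Qed.

Lemma upd_pointed_sat (hL : normal_logic L) (S : amodel) B (hB : pre_reps S B)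
  (phi : form) (hphi : incl (map Var (atoms phi)) B)
  (x y : @pmodel Atom Ag) a (hx : psat x (pre S a)) (hy : psat y (pre S a)) :
  models_logic (pm x) (pt x) -> models_logic (pm y) (pt y) ->
  nbisim B (depth phi) (pm x) (pm y) (pt x) (pt y) ->
  (psat (upd_pointed (pm x) S (pt x) a hx) phi <-> psat (upd_pointed (pm y) S (pt y) a hy) phi).
Proof.
  intros Hx Hy E.
  apply (nbisim_sat (map Var (atoms phi))) with (n := depth phi); [| lia |].
  - intros b Hb; apply in_map, Hb.
  - exact (upd_nbisim hL S B hB _ hphi _ _ _ _ _ _ _ _ _ _ _ _ hx hy Hx Hy E).
Qed.

End ProductUpdate.

Section ModalSpace.
Context {Atom Ag : Type}.
Variable X : @pmodel Atom Ag -> Prop.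

Lemma mspace_mpoint (c : mspace X) : exists x (hx : X x), c = mpoint X x hx.
Proof.
  destruct c as [C HC]; destruct HC as [x [hx EC]]; subst C.
  exists x, hx; unfold mpoint; f_equal; apply proof_irrelevance.
Qed.

Lemma basic_open_mpoint p x (hx : X x) : basic_open X p (mpoint X x hx) <-> psat x p.
Proof.
  split.
  - intros [w [_ [Ew Sw]]]; simpl in Ew.
    assert (Hx : mclass X x x) by (split; [exact hx | tauto]).
    rewrite Ew in Hx; apply (proj2 Hx), Sw.
  - intro Sx; exists x; auto.
Qed.

Lemma clean_mpoint (S : @amodel Atom Ag) (hS : closing X S) (f : mspace X -> mspace X)
  (hf : forall x (hx : X x) (d : mspace X), f (mpoint X x hx) = d <-> upd_in x S (proj1_sig d))
  x (hx : X x) :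
  exists a (ha : des S a) (h : psat x (pre S a)) (hz : X (upd_pointed (pm x) S (pt x) a h)),
    f (mpoint X x hx) = mpoint X _ hz.
Proof.
  destruct (hS x hx) as [a [ha [h hz]]].
  exists a, ha, h, hz; apply hf; exists a, ha, h; split; [exact hz | tauto].
Qed.

End ModalSpace.

Theorem proposition7 (Atom Ag : Type) (hAtom : countable Atom) (hAg : finite_type Ag)
  (L : @form Atom Ag -> Prop) (hL : normal_logic L)
  (X : @pmodel Atom Ag -> Prop)
  (hX : forall x, X x -> forall p, L p -> psat x p)
  (f : mspace X -> mspace X) :
  clean L X f -> stone_continuous X f.
Proof.
  intros [S [[l hl] [hclos [hdet [_ hf]]]]] O HO c Oc.
  destruct hAg as [ags hags].
  destruct (mspace_mpoint X c) as [x [hx ->]].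
  destruct (HO _ Oc) as [phi [Hphi HO']].
  set (B := map Var (atoms phi) ++ l).
  assert (hB : pre_reps L S B)
    by (intro a; destruct (hl a) as [q [Hq Eq]]; exists q; split; [apply in_or_app; right|]; auto).
  destruct (chars_cover B ags (depth phi) (pm x) (pt x)) as [chi [Hchi Sx]].
  exists chi; split; [apply basic_open_mpoint, Sx|].
  intros d Hd; destruct (mspace_mpoint X d) as [y [hy ->]].
  apply basic_open_mpoint in Hd.
  pose proof (chars_nbisim B ags hags _ _ _ _ _ _ Hchi Sx Hd) as Exy.
  destruct (clean_mpoint X S hclos f hf x hx) as [a [ha [hxa [hzx Ex]]]].
  destruct (clean_mpoint X S hclos f hf y hy) as [a' [ha' [hya' [hzy ->]]]].
  rewrite Ex, basic_open_mpoint in Hphi.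
  apply HO', basic_open_mpoint.
  assert (hya : psat y (pre S a))
    by exact (pre_transfer L S B hB _ _ _ _ a (hX x hx) (hX y hy) (nbisim_agree _ _ _ _ _ _ Exy) hxa).
  destruct (classic (a = a')) as [<-|Ne]; [|destruct (hdet y hy a a' ha ha' Ne (conj hya hya'))].
  apply (upd_pointed_sat L hL S B hB phi (incl_appl _ (incl_refl _)) x y a hxa hya'
           (hX x hx) (hX y hy) Exy), Hphi.
Qed.
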